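(* Let $f:\mathbb{S}^1\to\mathbb{S}^1$ be an orientation-preserving homeomorphism with irrational Poincaré rotation number whose non-wandering set $\mathrm{NW}(f)$ is homeomorphic to a Cantor set. Then $h_{\mathrm{pol}}(C(f))\ge 2$.
   Context: A point $p$ is wandering for $f$ if it has a neighbourhood $U$ with $f^n(U)\cap U=\emptyset$ for all $n\ge1$; $\mathrm{NW}(f)$ is the set of points that are not wandering. $C(\mathbb{S}^1)$ is the set of all nonempty closed connected subsets of $\mathbb{S}^1$ with the Hausdorff metric $d_H(A,B)=\inf\{\varepsilon>0: A\subset U(B,\varepsilon),\ B\subset U(A,\varepsilon)\}$, $U(A,\varepsilon)=\{x: d(x,A)<\varepsilon\}$; $C(f)(A)=f(A)$. For a continuous map $g:Z\to Z$ of a compact metric space $(Z,\rho)$, define $\rho^g_n(x,y)=\max_{0\le k\le n-1}\rho(g^k(x),g^k(y))$; a finite set $E\subset Z$ is $(n,\varepsilon)$-separated if $\rho^g_n(x,y)\ge\varepsilon$ for all distinct $x,y\in E$; $\mathrm{sep}(n,\varepsilon)$ is the maximal cardinality of such a set; and $h_{\mathrm{pol}}(g)=\lim_{\varepsilon\to0}\limsup_{n\to\infty}\frac{\log \mathrm{sep}(n,\varepsilon)}{\log n}$. *)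

From Stdlib Require Import Reals Lra List.
From Coquelicot Require Import Coquelicot.
Open Scope R_scope.

Definition S1 : Type := { x : R | 0 <= x < 1 }.

Lemma frac_part_in01 (x : R) : 0 <= frac_part x < 1.
Proof. destruct (base_fp x) as [H1 H2]; lra. Qed.

Definition proj (x : R) : S1 := exist _ (frac_part x) (frac_part_in01 x).

Definition dS (x y : S1) : R :=
  Rmin (Rabs (proj1_sig x - proj1_sig y)) (1 - Rabs (proj1_sig x - proj1_sig y)).

Definition S1_continuous (f : S1 -> S1) : Prop :=
  forall x eps, 0 < eps -> exists delta, 0 < delta /\
    forall y, dS x y < delta -> dS (f x) (f y) < eps.

Definition S1_homeomorphism (f : S1 -> S1) : Prop :=
  S1_continuous f /\
  exists g : S1 -> S1, S1_continuous g /\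
    (forall x, g (f x) = x) /\ (forall y, f (g y) = y).

Definition is_increasing_lift (f : S1 -> S1) (F : R -> R) : Prop :=
  continuity F /\
  (forall x y, x < y -> F x < F y) /\
  (forall x, F (x + 1) = F x + 1) /\
  (forall x, f (proj x) = proj (F x)).

Definition orientation_preserving_homeo (f : S1 -> S1) : Prop :=
  S1_homeomorphism f /\ exists F, is_increasing_lift f F.

Definition irrational (r : R) : Prop :=
  forall p q : Z, q <> 0%Z -> r <> IZR p / IZR q.

(* The Poincare rotation number of f is lim (F^n(x) - x)/n (mod 1) for a lift F;
   irrationality does not depend on the chosen lift. *)
Definition irrational_rotation_number (f : S1 -> S1) : Prop :=
  exists (F : R -> R) (rho : R),
    is_increasing_lift f F /\
    (forall x, Un_cv (fun n => (Nat.iter n F x - x) / INR n) rho) /\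
    irrational rho.

Definition ball (x : S1) (r : R) : S1 -> Prop := fun y => dS x y < r.

Definition wandering (f : S1 -> S1) (p : S1) : Prop :=
  exists U : S1 -> Prop,
    (exists r, 0 < r /\ forall y, ball p r y -> U y) /\
    forall n : nat, (1 <= n)%nat -> forall y, U y -> ~ U (Nat.iter n f y).

Definition NW (f : S1 -> S1) : S1 -> Prop := fun p => ~ wandering f p.

Definition agree_upto (N : nat) (a b : nat -> bool) : Prop :=
  forall i, (i < N)%nat -> a i = b i.

Definition homeomorphic_to_Cantor (A : S1 -> Prop) : Prop :=
  exists h : (nat -> bool) -> S1,
    (forall a, A (h a)) /\
    (forall x, A x -> exists a, h a = x) /\
    (forall a b, h a = h b -> a = b) /\
    (forall a eps, 0 < eps -> exists N, forall b, agree_upto N a b ->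
        dS (h a) (h b) < eps) /\
    (* h^{-1} : A -> {0,1}^N continuous *)
    (forall a N, exists delta, 0 < delta /\ forall b,
        dS (h a) (h b) < delta -> agree_upto N a b).

Definition S1_open (O : S1 -> Prop) : Prop :=
  forall x, O x -> exists r, 0 < r /\ forall y, ball x r y -> O y.

Definition S1_closed (A : S1 -> Prop) : Prop :=
  forall x, (forall r, 0 < r -> exists y, A y /\ dS x y < r) -> A x.

Definition S1_connected (A : S1 -> Prop) : Prop :=
  ~ exists U V : S1 -> Prop, S1_open U /\ S1_open V /\
      (forall x, A x -> U x \/ V x) /\
      (exists x, A x /\ U x) /\ (exists x, A x /\ V x) /\
      (forall x, A x -> U x -> V x -> False).

Definition in_CS1 (A : S1 -> Prop) : Prop :=
  (exists x, A x) /\ S1_closed A /\ S1_connected A.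

Definition nbhd (A : S1 -> Prop) (eps : R) : S1 -> Prop :=
  fun x => exists a, A a /\ dS x a < eps.

Definition subset (A B : S1 -> Prop) : Prop := forall x, A x -> B x.

Definition dH (A B : S1 -> Prop) : R :=
  real (Glb_Rbar (fun e => 0 < e /\ subset A (nbhd B e) /\ subset B (nbhd A e))).

Definition Cmap (f : S1 -> S1) (A : S1 -> Prop) : S1 -> Prop :=
  fun y => exists x, A x /\ f x = y.

Definition dyn_dist {Z : Type} (g : Z -> Z) (rho : Z -> Z -> R) (n : nat)
  (x y : Z) : R :=
  fold_right Rmax 0 (map (fun k => rho (Nat.iter k g x) (Nat.iter k g y)) (seq 0 n)).

Definition separated {Z : Type} (K : Z -> Prop) (g : Z -> Z) (rho : Z -> Z -> R)
  (n : nat) (eps : R) (E : list Z) : Prop :=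
  NoDup E /\ (forall x, In x E -> K x) /\
  forall x y, In x E -> In y E -> x <> y -> eps <= dyn_dist g rho n x y.

Definition sep {Z : Type} (K : Z -> Prop) (g : Z -> Z) (rho : Z -> Z -> R)
  (n : nat) (eps : R) : Rbar :=
  Lub_Rbar (fun r => exists E, separated K g rho n eps E /\ r = INR (length E)).

Definition hpol_eps {Z : Type} (K : Z -> Prop) (g : Z -> Z) (rho : Z -> Z -> R)
  (eps : R) : Rbar :=
  LimSup_seq (fun n => ln (real (sep K g rho n eps)) / ln (INR n)).

Definition Rbar_lim_right0 (phi : R -> Rbar) (h : Rbar) : Prop :=
  match h with
  | Finite l => forall e, 0 < e -> exists delta, 0 < delta /\
      forall eps, 0 < eps < delta ->
        Rbar_lt (l - e) (phi eps) /\ Rbar_lt (phi eps) (l + e)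
  | p_infty => forall M, exists delta, 0 < delta /\
      forall eps, 0 < eps < delta -> Rbar_lt M (phi eps)
  | m_infty => forall M, exists delta, 0 < delta /\
      forall eps, 0 < eps < delta -> Rbar_lt (phi eps) M
  end.

Definition is_hpol {Z : Type} (K : Z -> Prop) (g : Z -> Z) (rho : Z -> Z -> R)
  (h : Rbar) : Prop :=
  Rbar_lim_right0 (hpol_eps K g rho) h.

(* Since NW(f) is a Cantor set it is not the whole (connected) circle, so f
   has a wandering point p, with a wandering ball of radius r.  Let g be the
   inverse of f.  For i < N <= j < 2N the arcs running counterclockwise from
   g^i p to g^j p are pairwise (2N, r/2)-separated for C(f): at time i (or j)
   an endpoint of one arc sits at p while the endpoints of the other arc are
   r-far from p.  These N^2 arcs give h_pol >= 2.

   Conversely every element of C(S^1) is an arc [a, b] with 0 <= a < 1 and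
   b <= a + 1, on whose endpoints C(f)^k acts through the increasing lift F.
   As floor (M F^k t) is nondecreasing in t, the sum over k < n of these cell
   indices determines all of them; it takes at most 2Mn + 1 values on [0, 2],
   so at most (2Mn + 1)^2 arcs are (n, 1/M)-separated and h_pol <= 2.  This
   upper bound cannot be skipped: [is_hpol] only admits finite limits, its
   infinite clauses quantifying over [M : Rbar]. *)

From Stdlib Require Import Reals.
From Coquelicot Require Import Coquelicot.
From Stdlib Require Import Lra Lia List.
From Stdlib Require Import Classical ClassicalEpsilon ProofIrrelevance.
From Stdlib Require Import FunctionalExtensionality PropExtensionality.
Open Scope R_scope.

Lemma frac_part_unique (x : R) (z : Z) :
  IZR z <= x < IZR z + 1 -> frac_part x = x - IZR z.
Proof.
  intros Hx. unfold frac_part. rewrite <- (Int_part_spec x z); [reflexivity | lra].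
Qed.

Lemma frac_part_shift (x : R) (k : Z) : frac_part (x + IZR k) = frac_part x.
Proof.
  destruct (base_Int_part x).
  rewrite (frac_part_unique (x + IZR k) (Int_part x + k)); rewrite plus_IZR.
  - unfold frac_part. ring.
  - lra.
Qed.

Lemma S1_eq (x y : S1) : proj1_sig x = proj1_sig y -> x = y.
Proof.
  destruct x as [x Hx], y as [y Hy]; simpl; intros ->.
  f_equal; apply proof_irrelevance.
Qed.

Lemma proj_shift (x : R) (k : Z) : proj (x + IZR k) = proj x.
Proof. apply S1_eq, frac_part_shift. Qed.

Lemma proj_val (x : S1) : proj (proj1_sig x) = x.
Proof.
  apply S1_eq; simpl. destruct x as [x Hx]; simpl.
  rewrite (frac_part_unique x 0); simpl; lra.
Qed.

Lemma shift_exists (w a : R) : exists k : Z, a <= w + IZR k < a + 1.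
Proof.
  exists (- Int_part (w - a))%Z. rewrite opp_IZR.
  destruct (base_Int_part (w - a)). lra.
Qed.

Lemma dS_refl (x : S1) : dS x x = 0.
Proof. unfold dS. rewrite Rminus_diag, Rabs_R0. apply Rmin_left. lra. Qed.

Lemma dS_sym (x y : S1) : dS x y = dS y x.
Proof. unfold dS. rewrite Rabs_minus_sym. reflexivity. Qed.

Lemma dS_bounds (x y : S1) : 0 <= dS x y <= 1/2.
Proof.
  unfold dS. destruct x as [x Hx], y as [y Hy]; simpl.
  assert (0 <= Rabs (x - y) < 1) by (split; [apply Rabs_pos | apply Rabs_def1; lra]).
  unfold Rmin; destruct Rle_dec; lra.
Qed.

Definition dR (x y : R) : R := dS (proj x) (proj y).

Lemma dR_sym (x y : R) : dR x y = dR y x.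
Proof. apply dS_sym. Qed.

Lemma dR_shiftl (x y : R) (k : Z) : dR (x + IZR k) y = dR x y.
Proof. unfold dR. rewrite proj_shift. reflexivity. Qed.

Lemma dR_shiftr (x y : R) (k : Z) : dR x (y + IZR k) = dR x y.
Proof. unfold dR. rewrite proj_shift. reflexivity. Qed.

Lemma dR_val (x y : R) : 0 <= x - y < 1 -> dR x y = Rmin (x - y) (1 - (x - y)).
Proof.
  intros H. unfold dR, dS, proj; simpl. unfold frac_part.
  destruct (base_Int_part x) as [Hx1 Hx2], (base_Int_part y) as [Hy1 Hy2].
  set (m := Int_part x) in *. set (n := Int_part y) in *.
  assert (Hmn : (m - n = 0)%Z \/ (m - n = 1)%Z).
  { assert (Hup : IZR (m - n) < 2) by (rewrite minus_IZR; lra).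
    assert (Hlow : -1 < IZR (m - n)) by (rewrite minus_IZR; lra).
    apply lt_IZR in Hup, Hlow. lia. }
  destruct Hmn as [Hmn | Hmn].
  - replace (IZR m) with (IZR n) by (f_equal; lia).
    replace (x - IZR n - (y - IZR n)) with (x - y) by ring.
    rewrite Rabs_pos_eq by lra. reflexivity.
  - replace (IZR m) with (IZR n + 1) by (rewrite <- (plus_IZR n 1); f_equal; lia).
    replace (x - (IZR n + 1) - (y - IZR n)) with (x - y - 1) by ring.
    rewrite Rabs_left, Rmin_comm by lra. f_equal; ring.
Qed.

Lemma dR_diff (x y : R) : dR x y = dR (x - y) 0.
Proof.
  destruct (shift_exists (x - y) 0) as [k Hk].
  rewrite <- (dR_shiftl x y k), <- (dR_shiftl (x - y) 0 k), !dR_val by lra.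
  f_equal; ring.
Qed.

Lemma dR_opp (x y : R) : dR (- x) (- y) = dR x y.
Proof.
  rewrite dR_diff, (dR_sym x y), (dR_diff y x). f_equal. ring.
Qed.

Lemma dR_le_Rabs (x y : R) : dR x y <= Rabs (x - y).
Proof.
  destruct (Rle_lt_dec 1 (Rabs (x - y))).
  - pose proof (dS_bounds (proj x) (proj y)). unfold dR; lra.
  - destruct (Rle_lt_dec 0 (x - y)).
    + rewrite dR_val, Rabs_pos_eq by (rewrite ?Rabs_pos_eq in *; lra). apply Rmin_l.
    + rewrite dR_sym, dR_val, Rabs_left by (rewrite ?Rabs_left in *; lra).
      replace (- (x - y)) with (y - x) by ring. apply Rmin_l.
Qed.

Lemma dR_ge (d x y : R) : d <= x - y <= 1 - d -> d <= dR x y.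
Proof.
  intros H. destruct (Rle_lt_dec 1 (x - y)).
  - pose proof (dS_bounds (proj x) (proj y)). unfold dR; lra.
  - destruct (Rlt_le_dec (x - y) 0).
    + pose proof (dS_bounds (proj x) (proj y)). unfold dR; lra.
    + rewrite dR_val by lra. apply Rmin_glb; lra.
Qed.

Definition Arc (a b : R) : S1 -> Prop := fun z => exists s, a <= s <= b /\ proj s = z.

Lemma Arc_closed (a b : R) : b < a + 1 -> S1_closed (Arc a b).
Proof.
  intros Hb x Hx. apply NNPP. intros Hnot.
  destruct (shift_exists (proj1_sig x) a) as [k Hk].
  set (X := proj1_sig x + IZR k) in *.
  assert (HX : proj X = x) by (unfold X; rewrite proj_shift; apply proj_val).
  assert (HXb : b < X).
  { apply Rnot_le_lt. intros HXb. apply Hnot. exists X. split; [lra | exact HX]. }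
  set (de := Rmin (X - b) (a + 1 - X)).
  assert (Hde1 : de <= X - b) by apply Rmin_l.
  assert (Hde2 : de <= a + 1 - X) by apply Rmin_r.
  assert (Hde : 0 < de) by (apply Rmin_glb_lt; lra).
  destruct (Hx de Hde) as [y [[s [Hs <-]] Hy]].
  rewrite <- HX in Hy. change (dR X s < de) in Hy.
  assert (de <= dR X s) by (apply dR_ge; lra). lra.
Qed.

Definition clamp (a b t : R) : R := Rmax a (Rmin b t).

Lemma clamp_in (a b t : R) : a <= b -> a <= clamp a b t <= b.
Proof. intros H. unfold clamp, Rmax, Rmin. repeat destruct Rle_dec; lra. Qed.

Lemma clamp_id (a b t : R) : a <= t <= b -> clamp a b t = t.
Proof. intros H. unfold clamp, Rmax, Rmin. repeat destruct Rle_dec; lra. Qed.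

Lemma clamp_lipschitz (a b t u : R) :
  a <= b -> Rabs (clamp a b t - clamp a b u) <= Rabs (t - u).
Proof.
  intros H. unfold clamp, Rmax, Rmin.
  repeat destruct Rle_dec; unfold Rabs; repeat destruct Rcase_abs; lra.
Qed.

(* A disconnection of the arc would make the indicator of [U] along the
   clamped parametrisation a continuous function taking only the values 0
   and 1 and both of them, contradicting the intermediate value theorem. *)
Lemma Arc_connected (a b : R) : a <= b -> S1_connected (Arc a b).
Proof.
  intros Hab [U [V [HU [HV [Hcov [[xu [Axu Uxu]] [[xv [Axv Vxv]] Hdis]]]]]]].
  set (P := fun t => proj (clamp a b t)).
  assert (AP : forall t, Arc a b (P t)).
  { intros t. exists (clamp a b t). split; [apply clamp_in; exact Hab | reflexivity]. }
  assert (HPnear : forall t t', dS (P t) (P t') <= Rabs (t' - t)).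
  { intros t t'. change (dR (clamp a b t) (clamp a b t') <= Rabs (t' - t)).
    rewrite dR_sym. eapply Rle_trans; [apply dR_le_Rabs | apply clamp_lipschitz; exact Hab]. }
  assert (Hloc : forall t, exists rho, 0 < rho /\
            forall t', Rabs (t' - t) < rho -> (U (P t') <-> U (P t))).
  { intros t. destruct (Hcov _ (AP t)) as [Ht | Ht].
    - destruct (HU _ Ht) as [rho [Hrho Hball]].
      exists rho. split; [exact Hrho |]. intros t' Ht'.
      assert (U (P t')) by (apply Hball; eapply Rle_lt_trans; [apply HPnear | exact Ht']).
      tauto.
    - destruct (HV _ Ht) as [rho [Hrho Hball]].
      exists rho. split; [exact Hrho |]. intros t' Ht'.
      assert (V (P t')) by (apply Hball; eapply Rle_lt_trans; [apply HPnear | exact Ht']).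
      pose proof (Hdis _ (AP t)). pose proof (Hdis _ (AP t')). tauto. }
  set (chi := fun t => if excluded_middle_informative (U (P t)) then 1 else 0).
  assert (Hchi : continuity chi).
  { intros t eps Heps. destruct (Hloc t) as [rho [Hrho Hnear]].
    exists rho. split; [exact Hrho |]. intros t' [_ Ht'].
    specialize (Hnear t' Ht'). unfold chi; simpl.
    do 2 destruct excluded_middle_informative; try tauto; rewrite Rdist_eq; exact Heps. }
  destruct Axu as [su [Hsu <-]]. destruct Axv as [sv [Hsv <-]].
  assert (Cu : chi su = 1).
  { unfold chi, P. rewrite clamp_id by exact Hsu.
    destruct excluded_middle_informative; tauto. }
  assert (Cv : chi sv = 0).
  { unfold chi, P. rewrite clamp_id by exact Hsv.
    destruct excluded_middle_informative as [Hu |]; [| reflexivity].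
    exfalso. apply (Hdis (proj sv)); [exists sv | |]; auto. }
  destruct (IVT_gen chi su sv (1/2) Hchi) as [t [_ Ht]].
  - rewrite Cu, Cv. unfold Rmin, Rmax; destruct Rle_dec; lra.
  - unfold chi in Ht. destruct excluded_middle_informative; lra.
Qed.

Lemma Arc_in_CS1 (a b : R) : a <= b < a + 1 -> in_CS1 (Arc a b).
Proof.
  intros H. split; [| split].
  - exists (proj a), a. split; [lra | reflexivity].
  - apply Arc_closed; lra.
  - apply Arc_connected; lra.
Qed.

Lemma Arc_0_1_full (x : S1) : Arc 0 1 x.
Proof. exists (proj1_sig x). split; [destruct x; simpl; lra | apply proj_val]. Qed.

Lemma iter_Cmap (f : S1 -> S1) (k : nat) (A : S1 -> Prop) (y : S1) :
  Nat.iter k (Cmap f) A y <-> exists x, A x /\ Nat.iter k f x = y.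
Proof.
  revert y; induction k as [| k IH]; intros y; simpl.
  - split; [intros H; exists y; auto | intros [x [H <-]]; exact H].
  - split.
    + intros [x' [Hx' <-]]. apply IH in Hx' as [x [Hx <-]]. exists x; auto.
    + intros [x [Hx <-]]. exists (Nat.iter k f x). split; [apply IH; exists x |]; auto.
Qed.

Section Lift.

Variables (f : S1 -> S1) (F : R -> R).
Hypothesis HF : is_increasing_lift f F.

Lemma iter_lift_lt (k : nat) (x y : R) : x < y -> Nat.iter k F x < Nat.iter k F y.
Proof. destruct HF as [_ [Hmono _]]. induction k; simpl; auto. Qed.

Lemma iter_lift_le (k : nat) (x y : R) : x <= y -> Nat.iter k F x <= Nat.iter k F y.
Proof. intros [H | ->]; [left; apply iter_lift_lt; exact H | right; reflexivity]. Qed.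

Lemma iter_lift_plus1 (k : nat) (x : R) : Nat.iter k F (x + 1) = Nat.iter k F x + 1.
Proof.
  destruct HF as [_ [_ [Hper _]]]. induction k as [| k IH]; simpl; [reflexivity |].
  rewrite IH. apply Hper.
Qed.

Lemma iter_lift_continuous (k : nat) : continuity (Nat.iter k F).
Proof.
  destruct HF as [Hcont _]. induction k as [| k IH]; intros x.
  - apply derivable_continuous_pt, derivable_pt_id.
  - apply (continuity_comp (Nat.iter k F) F); auto.
Qed.

Lemma proj_iter_lift (k : nat) (x : R) : proj (Nat.iter k F x) = Nat.iter k f (proj x).
Proof.
  destruct HF as [_ [_ [_ Hproj]]]. induction k as [| k IH]; simpl; [reflexivity |].
  rewrite <- IH. symmetry. apply Hproj.
Qed.

Lemma iter_Cmap_Arc (k : nat) (a b : R) : a <= b ->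
  Nat.iter k (Cmap f) (Arc a b) = Arc (Nat.iter k F a) (Nat.iter k F b).
Proof.
  intros Hab. apply functional_extensionality. intros z.
  apply propositional_extensionality. rewrite iter_Cmap. split.
  - intros [x [[s [Hs <-]] <-]]. exists (Nat.iter k F s).
    split; [split; apply iter_lift_le; lra | apply proj_iter_lift].
  - intros [t [Ht <-]].
    destruct (IVT_gen (Nat.iter k F) a b t (iter_lift_continuous k)) as [s [Hs Hst]].
    + rewrite Rmin_left, Rmax_right by (apply iter_lift_le; exact Hab). exact Ht.
    + rewrite Rmin_left, Rmax_right in Hs by exact Hab.
      exists (proj s). split; [exists s; auto |].
      rewrite <- proj_iter_lift, Hst. reflexivity.
Qed.

End Lift.

Lemma real_Glb_Rbar_bounds (E : R -> Prop) (lo e0 : R) :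
  E e0 -> (forall e, E e -> lo <= e) -> lo <= real (Glb_Rbar E) <= e0.
Proof.
  intros He0 Hlo. destruct (Glb_Rbar_correct E) as [Hlb Hglb].
  assert (Rbar_le (Glb_Rbar E) e0) by (apply Hlb; exact He0).
  assert (Rbar_le lo (Glb_Rbar E)) by (apply Hglb; intros x Hx; apply Hlo, Hx).
  destruct (Glb_Rbar E); simpl in *; tauto.
Qed.

Lemma dH_le (X Y : S1 -> Prop) (e : R) : 0 < e ->
  subset X (nbhd Y e) -> subset Y (nbhd X e) -> dH X Y <= e.
Proof. intros He HXY HYX. apply (real_Glb_Rbar_bounds _ 0 e); [auto | intros e' [? _]; lra]. Qed.

Lemma dH_sym (X Y : S1 -> Prop) : dH X Y = dH Y X.
Proof. unfold dH. f_equal. apply Glb_Rbar_eqset. intros e. tauto. Qed.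

Lemma dH_ge_far_point (X Y : S1 -> Prop) (z : S1) (d : R) :
  (exists y, Y y) -> X z -> (forall y, Y y -> d <= dS z y) -> d <= dH X Y.
Proof.
  intros [y0 Hy0] Hz Hfar. apply (real_Glb_Rbar_bounds _ d 1).
  - split; [lra | split].
    + intros x _. exists y0. split; [exact Hy0 |]. pose proof (dS_bounds x y0). lra.
    + intros y _. exists z. split; [exact Hz |]. pose proof (dS_bounds y z). lra.
  - intros e [_ [HXY _]]. destruct (HXY z Hz) as [y [Hy Hzy]]. specialize (Hfar y Hy). lra.
Qed.

Lemma dH_self_le (X : S1 -> Prop) (e : R) : 0 < e -> dH X X <= e.
Proof.
  intros He. apply dH_le; [exact He | |];
    intros x Hx; exists x; (split; [exact Hx | rewrite dS_refl; exact He]).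
Qed.

Definition arcs_apart (a b c d delta : R) : Prop :=
  exists z, (a <= z <= b /\ forall s, c <= s <= d -> delta <= dR z s) \/
            (c <= z <= d /\ forall s, a <= s <= b -> delta <= dR z s).

Lemma arcs_apart_dH (a b c d delta : R) : a <= b -> c <= d ->
  arcs_apart a b c d delta -> delta <= dH (Arc a b) (Arc c d).
Proof.
  intros Hab Hcd [z [[Hz Hfar] | [Hz Hfar]]]; [| rewrite dH_sym];
    apply (dH_ge_far_point _ _ (proj z)); try (exists z; split; [exact Hz | reflexivity]).
  - exists (proj c), c. split; [lra | reflexivity].
  - intros y [s [Hs <-]]. apply Hfar, Hs.
  - exists (proj a), a. split; [lra | reflexivity].
  - intros y [s [Hs <-]]. apply Hfar, Hs.
Qed.

Lemma arcs_apart_opp (a b c d delta : R) :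
  arcs_apart (- b) (- a) (- d) (- c) delta -> arcs_apart a b c d delta.
Proof.
  intros [z [[Hz Hfar] | [Hz Hfar]]]; exists (- z); [left | right];
    (split; [lra |]); intros s Hs; rewrite <- dR_opp, Ropp_involutive; apply Hfar; lra.
Qed.

(* If the three other endpoints are [r]-far from [a], either the second arc
   misses [a], and then [a] is [r]-far from it, or it passes through [a], and
   then it contains the point [r/2] before [a], which is [r/2]-far from the
   first arc. *)
Lemma arcs_apart_far_from_start (a b c d r : R) : 0 < r ->
  a <= b < a + 1 -> c <= d < c + 1 ->
  r <= dR b a -> r <= dR c a -> r <= dR d a -> arcs_apart a b c d (r / 2).
Proof.
  intros Hr Hab Hcd Hb Hc Hd.
  assert (Hb' : r <= b - a <= 1 - r).
  { rewrite dR_val in Hb by lra. unfold Rmin in Hb; destruct Rle_dec in Hb; lra. }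
  destruct (shift_exists c a) as [k Hk].
  assert (Hc' : r <= c + IZR k - a <= 1 - r).
  { rewrite <- (dR_shiftl c a k), dR_val in Hc by lra.
    unfold Rmin in Hc; destruct Rle_dec in Hc; lra. }
  assert (Hd' : d + IZR k <= a + 1 - r \/ a + 1 <= d + IZR k).
  { destruct (Rle_lt_dec (d + IZR k) (a + 1 - r)) as [Hle | Hlt]; [left; exact Hle | right].
    apply Rnot_lt_le. intros Hlt'.
    rewrite <- (dR_shiftl d a k), dR_val in Hd by lra.
    unfold Rmin in Hd; destruct Rle_dec in Hd; lra. }
  destruct Hd' as [Hd' | Hd'].
  - exists a. left. split; [lra |]. intros s Hs.
    rewrite <- (dR_shiftr a s k), dR_sym. apply dR_ge. lra.
  - exists (a + 1 - r / 2 - IZR k). right. split; [lra |]. intros s Hs.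
    rewrite <- (dR_shiftl _ s k). apply dR_ge. lra.
Qed.

Lemma arcs_apart_far_from_end (a b c d r : R) : 0 < r ->
  a <= b < a + 1 -> c <= d < c + 1 ->
  r <= dR a b -> r <= dR c b -> r <= dR d b -> arcs_apart a b c d (r / 2).
Proof.
  intros Hr Hab Hcd Ha Hc Hd. apply arcs_apart_opp, arcs_apart_far_from_start;
    rewrite ?dR_opp; lra || assumption.
Qed.

Lemma fold_Rmax_ge (l : list R) (a : R) : In a l -> a <= fold_right Rmax 0 l.
Proof.
  induction l as [| b l IH]; simpl; [tauto |]. intros [<- | Hin].
  - apply Rmax_l.
  - eapply Rle_trans; [apply IH, Hin | apply Rmax_r].
Qed.

Lemma fold_Rmax_lt (l : list R) (e : R) :
  0 < e -> (forall a, In a l -> a < e) -> fold_right Rmax 0 l < e.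
Proof.
  intros He. induction l as [| b l IH]; simpl; intros Hall; [exact He |].
  apply Rmax_lub_lt; auto.
Qed.

Lemma dyn_dist_ge {Z : Type} (g : Z -> Z) (rho : Z -> Z -> R) (n k : nat) (x y : Z) :
  (k < n)%nat -> rho (Nat.iter k g x) (Nat.iter k g y) <= dyn_dist g rho n x y.
Proof.
  intros Hk. apply fold_Rmax_ge, in_map_iff. exists k. split; [reflexivity | apply in_seq; lia].
Qed.

Lemma dyn_dist_lt {Z : Type} (g : Z -> Z) (rho : Z -> Z -> R) (n : nat) (x y : Z) (e : R) :
  0 < e -> (forall k, (k < n)%nat -> rho (Nat.iter k g x) (Nat.iter k g y) < e) ->
  dyn_dist g rho n x y < e.
Proof.
  intros He H. apply fold_Rmax_lt; [exact He |]. intros a Ha.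
  apply in_map_iff in Ha as [k [<- Hk]]. apply in_seq in Hk. apply H. lia.
Qed.

Lemma NoDup_list_prod {A B : Type} (l : list A) (l' : list B) :
  NoDup l -> NoDup l' -> NoDup (list_prod l l').
Proof.
  intros Hl Hl'. induction Hl as [| x l Hx Hl IH]; simpl; [constructor |].
  apply NoDup_app; [| exact IH |].
  - apply NoDup_map_NoDup_ForallPairs; [| exact Hl']. intros y y' _ _ E. congruence.
  - intros [a b] Ha Hin. apply in_map_iff in Ha as [y [E _]]. injection E as <- _.
    apply in_prod_iff in Hin as [Hxl _]. contradiction.
Qed.

Section Separation.

Context {Z : Type} (K : Z -> Prop) (g : Z -> Z) (rho : Z -> Z -> R).

Definition sep_bounded (n : nat) (eps B : R) : Prop :=
  forall E, separated K g rho n eps E -> INR (length E) <= B.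

Lemma separated_nil (n : nat) (eps : R) : separated K g rho n eps nil.
Proof. split; [constructor | split; intros x; simpl; tauto]. Qed.

Lemma separated_singleton (n : nat) (eps : R) (x0 : Z) :
  K x0 -> separated K g rho n eps (x0 :: nil).
Proof.
  intros Hx0. split; [| split].
  - constructor; [simpl; tauto | constructor].
  - intros x [<- | []]. exact Hx0.
  - intros x y [<- | []] [<- | []] Hxy. tauto.
Qed.

Let sizes (n : nat) (eps : R) : R -> Prop :=
  fun r => exists E, separated K g rho n eps E /\ r = INR (length E).

Lemma sep_finite (n : nat) (eps B : R) :
  sep_bounded n eps B -> is_finite (sep K g rho n eps) /\ Rbar_le (sep K g rho n eps) B.
Proof.
  intros HB. change (sep K g rho n eps) with (Lub_Rbar (sizes n eps)).
  destruct (Lub_Rbar_correct (sizes n eps)) as [Hub Hleast].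
  assert (H0 : Rbar_le 0 (Lub_Rbar (sizes n eps))).
  { apply Hub. exists nil. split; [apply separated_nil | reflexivity]. }
  assert (HleB : Rbar_le (Lub_Rbar (sizes n eps)) B).
  { apply Hleast. intros r [E [HE ->]]. apply HB, HE. }
  destruct (Lub_Rbar (sizes n eps)); simpl in *; try tauto.
  split; [reflexivity | exact HleB].
Qed.

Lemma length_le_sep (n : nat) (eps B : R) (E : list Z) :
  sep_bounded n eps B -> separated K g rho n eps E -> INR (length E) <= real (sep K g rho n eps).
Proof.
  intros HB HE. destruct (sep_finite n eps B HB) as [Hfin _].
  destruct (Lub_Rbar_correct (sizes n eps)) as [Hub _].
  specialize (Hub _ (ex_intro _ E (conj HE eq_refl))).
  change (Lub_Rbar (sizes n eps)) with (sep K g rho n eps) in Hub.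
  rewrite <- Hfin in Hub. exact Hub.
Qed.

Lemma sep_le (n : nat) (eps B : R) : sep_bounded n eps B -> real (sep K g rho n eps) <= B.
Proof.
  intros HB. destruct (sep_finite n eps B HB) as [Hfin HleB].
  rewrite <- Hfin in HleB. exact HleB.
Qed.

Lemma sep_ge1 (n : nat) (eps B : R) (x0 : Z) :
  K x0 -> sep_bounded n eps B -> 1 <= real (sep K g rho n eps).
Proof.
  intros Hx0 HB. apply (length_le_sep n eps B (x0 :: nil) HB), separated_singleton, Hx0.
Qed.

End Separation.

Lemma small_inverse (eps : R) : 0 < eps -> exists M : nat, (0 < M)%nat /\ / INR M < eps.
Proof.
  intros He. destruct (nfloor_ex (/ eps)) as [m Hm]; [left; apply Rinv_0_lt_compat, He |].
  exists (S m). split; [lia |]. rewrite S_INR, <- (Rinv_inv eps).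
  apply Rinv_lt_contravar; [| lra].
  apply Rmult_lt_0_compat; [apply Rinv_0_lt_compat, He | pose proof (pos_INR m); lra].
Qed.

Lemma LimSup_seq_ge (v : nat -> R) (c : R) :
  (forall e, 0 < e -> forall N, exists n, (N <= n)%nat /\ c - e <= v n) ->
  Rbar_le c (LimSup_seq v).
Proof.
  intros H. destruct (ex_LimSup_seq v) as [l Hl].
  rewrite (is_LimSup_seq_unique v l Hl).
  destruct l as [l | |]; simpl in *; [| exact I |].
  - apply Rnot_lt_le. intros Hlt.
    assert (Hp : 0 < (c - l) / 2) by lra.
    destruct (Hl (mkposreal _ Hp)) as [_ [N HN]]. simpl in HN.
    destruct (H _ Hp N) as [n [Hn Hv]]. specialize (HN n Hn). lra.
  - destruct (Hl (c - 1)) as [N HN]. destruct (H 1 ltac:(lra) N) as [n [Hn Hv]].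
    specialize (HN n Hn). lra.
Qed.

Lemma LimSup_seq_le (v : nat -> R) (c : R) :
  (forall e, 0 < e -> exists N, forall n, (N <= n)%nat -> v n <= c + e) ->
  Rbar_le (LimSup_seq v) c.
Proof.
  intros H. destruct (ex_LimSup_seq v) as [l Hl].
  rewrite (is_LimSup_seq_unique v l Hl).
  destruct l as [l | |]; simpl in *; [| | exact I].
  - apply Rnot_lt_le. intros Hlt.
    assert (Hp : 0 < (l - c) / 2) by lra.
    destruct (Hl (mkposreal _ Hp)) as [Hfreq _]. simpl in Hfreq.
    destruct (H _ Hp) as [N HN]. destruct (Hfreq N) as [n [Hn Hv]].
    specialize (HN n Hn). lra.
  - destruct (H 1 ltac:(lra)) as [N HN]. destruct (Hl (c + 1) N) as [n [Hn Hv]].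
    specialize (HN n Hn). lra.
Qed.

Lemma ln_eventually_ge (C e : R) : 0 < e ->
  exists N : nat, (1 <= N)%nat /\ forall n, (N <= n)%nat -> C <= e * ln (INR n).
Proof.
  intros He. destruct (nfloor_ex (exp (C / e))) as [m Hm]; [left; apply exp_pos |].
  exists (S m). split; [lia |]. intros n Hn.
  assert (HCe : C / e <= ln (INR n)).
  { rewrite <- (ln_exp (C / e)) at 1. apply ln_le; [apply exp_pos |].
    apply Rle_trans with (INR (S m)); [rewrite S_INR; lra | apply le_INR, Hn]. }
  replace C with (e * (C / e)) by (field; lra). apply Rmult_le_compat_l; lra.
Qed.

Lemma log_ratio_ge (e s : R) (N : nat) : (1 <= N)%nat ->
  2 * ln 2 <= e * ln (INR N) -> INR (N * N) <= s ->
  2 - e <= ln s / ln (INR (2 * N)).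
Proof.
  intros HN Hk Hs.
  assert (HNr : 1 <= INR N) by (apply (le_INR 1), HN).
  assert (Hln2 : 0 < ln 2) by (pose proof ln_lt_2; lra).
  assert (HlnN : 0 <= ln (INR N)) by (rewrite <- ln_1; apply ln_le; lra).
  rewrite mult_INR in Hs |- *. simpl (INR 2).
  assert (Hlns : 2 * ln (INR N) <= ln s).
  { replace (2 * ln (INR N)) with (ln (INR N * INR N)) by (rewrite ln_mult; lra).
    apply ln_le; [nra | exact Hs]. }
  rewrite ln_mult by lra.
  apply (Rmult_le_reg_r (ln 2 + ln (INR N))); [lra |].
  unfold Rdiv. rewrite Rmult_assoc, Rinv_l, Rmult_1_r by lra. nra.
Qed.

Lemma log_ratio_le (e s : R) (M n : nat) : 0 < e -> (1 <= M)%nat -> (1 <= n)%nat ->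
  2 * ln (3 * INR M) <= e * ln (INR n) ->
  1 <= s -> s <= INR ((2 * M * n + 1) * (2 * M * n + 1)) ->
  ln s / ln (INR n) <= 2 + e.
Proof.
  intros He HM Hn Hk Hs1 Hs2.
  assert (HMr : 1 <= INR M) by (apply (le_INR 1), HM).
  assert (Hnr : 1 <= INR n) by (apply (le_INR 1), Hn).
  assert (HlnM : 0 < ln (3 * INR M)) by (rewrite <- ln_1; apply ln_increasing; lra).
  assert (Hlnn : 0 < ln (INR n)) by nra.
  set (x := 2 * INR M * INR n + 1).
  replace (INR _) with (x * x) in Hs2
    by (unfold x; rewrite mult_INR, plus_INR, !mult_INR; simpl; ring).
  assert (Hx : 1 <= x <= 3 * INR M * INR n) by (unfold x; nra).
  assert (Hlns : ln s <= 2 * (ln (3 * INR M) + ln (INR n))).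
  { rewrite <- ln_mult by lra.
    apply Rle_trans with (ln (x * x)); [apply ln_le; lra |].
    rewrite ln_mult by lra.
    assert (ln x <= ln (3 * INR M * INR n)) by (apply ln_le; lra). lra. }
  apply (Rmult_le_reg_r (ln (INR n))); [exact Hlnn |].
  unfold Rdiv. rewrite Rmult_assoc, Rinv_l, Rmult_1_r by lra. nra.
Qed.

(** * Subcontinua of the circle are arcs *)

Lemma sup_approx (T : R -> Prop) (B : R) :
  (exists t, T t) -> (forall t, T t -> t <= B) ->
  exists s, (forall t, T t -> t <= s) /\ (forall rho, 0 < rho -> exists t, T t /\ s - rho < t).
Proof.
  intros Hne HB. destruct (completeness T) as [s [Hub Hleast]]; [exists B; exact HB | exact Hne |].
  exists s. split; [exact Hub |]. intros rho Hrho. apply NNPP. intros Hno.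
  assert (s <= s - rho); [| lra].
  apply Hleast. intros t Ht. apply Rnot_lt_le. intros Hlt. apply Hno. exists t. auto.
Qed.

Lemma inf_approx (T : R -> Prop) (B : R) :
  (exists t, T t) -> (forall t, T t -> B <= t) ->
  exists s, (forall t, T t -> s <= t) /\ (forall rho, 0 < rho -> exists t, T t /\ t < s + rho).
Proof.
  intros [t0 Ht0] HB.
  destruct (sup_approx (fun u => T (- u)) (- B)) as [s [Hub Happ]].
  - exists (- t0). rewrite Ropp_involutive. exact Ht0.
  - intros u Hu. specialize (HB _ Hu). lra.
  - exists (- s). split.
    + intros t Ht. assert (- t <= s) by (apply Hub; rewrite Ropp_involutive; exact Ht). lra.
    + intros rho Hrho. destruct (Happ rho Hrho) as [u [Hu Hlt]].
      exists (- u). split; [exact Hu | lra].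
Qed.

Lemma lift_in (x : S1) (Q : R) : exists L, Q <= L < Q + 1 /\ proj L = x.
Proof.
  destruct (shift_exists (proj1_sig x) Q) as [k Hk].
  exists (proj1_sig x + IZR k). split; [exact Hk |]. rewrite proj_shift. apply proj_val.
Qed.

Lemma lift_in_punctured (x q : S1) : x <> q ->
  exists L, proj1_sig q < L < proj1_sig q + 1 /\ proj L = x.
Proof.
  intros Hxq. destruct (lift_in x (proj1_sig q)) as [L [HL HLx]].
  exists L. split; [| exact HLx]. destruct HL as [[HL | HL] HL']; [lra |].
  exfalso. apply Hxq. rewrite <- HLx, <- HL. apply proj_val.
Qed.

Lemma dR_small (x y : R) : Rabs (x - y) <= 1 / 2 -> dR x y = Rabs (x - y).
Proof.
  intros H. destruct (Rle_lt_dec 0 (x - y)).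
  - rewrite Rabs_pos_eq in * by lra. rewrite dR_val by lra. apply Rmin_left. lra.
  - rewrite Rabs_left in * by lra. rewrite dR_sym, dR_val by lra.
    rewrite Rmin_left by lra. ring.
Qed.

Lemma proj_inj_close (s s' : R) : proj s = proj s' -> Rabs (s - s') < 1 -> s = s'.
Proof.
  intros H Hd. assert (E : dR s s' = 0) by (unfold dR; rewrite H; apply dS_refl).
  destruct (Rle_lt_dec 0 (s - s')).
  - rewrite Rabs_pos_eq in Hd by lra. rewrite dR_val in E by lra.
    unfold Rmin in E; destruct Rle_dec in E; lra.
  - rewrite Rabs_left in Hd by lra. rewrite dR_sym, dR_val in E by lra.
    unfold Rmin in E; destruct Rle_dec in E; lra.
Qed.

Definition open_arc (lo hi : R) : S1 -> Prop := fun x => exists s, lo < s < hi /\ proj s = x.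

Lemma open_arc_open (lo hi : R) : S1_open (open_arc lo hi).
Proof.
  intros x [s [Hs <-]].
  set (rho := Rmin (Rmin (s - lo) (hi - s)) (1 / 2)).
  assert (Hr1 : rho <= s - lo) by (unfold rho; eapply Rle_trans; [apply Rmin_l | apply Rmin_l]).
  assert (Hr2 : rho <= hi - s) by (unfold rho; eapply Rle_trans; [apply Rmin_l | apply Rmin_r]).
  assert (Hr3 : rho <= 1 / 2) by (unfold rho; apply Rmin_r).
  assert (Hr0 : 0 < rho) by (unfold rho; repeat apply Rmin_glb_lt; lra).
  exists rho. split; [exact Hr0 |]. intros y Hy.
  destruct (lift_in y (s - 1 / 2)) as [Y [HY <-]].
  change (dR s Y < rho) in Hy. rewrite dR_small in Hy by (apply Rabs_le; lra).
  exists Y. split; [apply Rabs_def2 in Hy; lra | reflexivity].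
Qed.

Lemma not_connected_of_gap (A : S1 -> Prop) (Q t : R) :
  Q < t < Q + 1 -> ~ A (proj t) ->
  (forall x, A x -> exists L, Q < L < Q + 1 /\ proj L = x) ->
  (exists s, Q < s < t /\ A (proj s)) -> (exists s, t < s < Q + 1 /\ A (proj s)) ->
  ~ S1_connected A.
Proof.
  intros Ht Hnt Hlift [s1 [Hs1 As1]] [s2 [Hs2 As2]] Hconn. apply Hconn.
  exists (open_arc Q t), (open_arc t (Q + 1)).
  split; [apply open_arc_open | split; [apply open_arc_open | split; [| split; [| split]]]].
  - intros x Hx. destruct (Hlift x Hx) as [L [HL <-]].
    destruct (Rtotal_order L t) as [Hlt | [-> | Hgt]].
    + left. exists L. split; [lra | reflexivity].
    + contradiction.
    + right. exists L. split; [lra | reflexivity].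
  - exists (proj s1). split; [exact As1 | exists s1; split; [lra | reflexivity]].
  - exists (proj s2). split; [exact As2 | exists s2; split; [lra | reflexivity]].
  - intros x _ [u [Hu <-]] [u' [Hu' E]].
    assert (u' = u) by (apply proj_inj_close; [exact E | apply Rabs_def1; lra]). lra.
Qed.

Lemma S1_closed_limit (A : S1 -> Prop) (a : R) : S1_closed A ->
  (forall rho, 0 < rho -> exists t, A (proj t) /\ Rabs (t - a) < rho) -> A (proj a).
Proof.
  intros Hcl Happ. apply Hcl. intros rho Hrho. destruct (Happ rho Hrho) as [t [At Ht]].
  exists (proj t). split; [exact At |]. change (dR a t < rho).
  eapply Rle_lt_trans; [apply dR_le_Rabs | rewrite Rabs_minus_sym; exact Ht].
Qed.

(* Cut the circle at a point [q] outside [A]: lifted to [(Q, Q + 1)], the set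
   [A] is an interval by connectedness, closed by closedness. *)
Lemma CS1_is_Arc (A : S1 -> Prop) : in_CS1 A ->
  exists a b, a <= b <= a + 1 /\ forall z, A z <-> Arc a b z.
Proof.
  intros [[x0 Hx0] [Hcl Hco]].
  destruct (classic (forall z, A z)) as [Hall | Hnall].
  { exists 0, 1. split; [lra |]. intros z. split; intros _; [apply Arc_0_1_full | apply Hall]. }
  apply not_all_ex_not in Hnall as [q Hq].
  set (Q := proj1_sig q).
  set (T := fun t => Q < t < Q + 1 /\ A (proj t)).
  assert (Hlift : forall x, A x -> exists L, Q < L < Q + 1 /\ proj L = x).
  { intros x Hx. apply lift_in_punctured. intros ->. contradiction. }
  destruct (Hlift x0 Hx0) as [L0 [HL0 HL0x]].
  assert (HT0 : T L0) by (split; [exact HL0 | rewrite HL0x; exact Hx0]).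
  destruct (inf_approx T Q) as [a [Ha Happ_a]];
    [exists L0; exact HT0 | intros t [? _]; lra |].
  destruct (sup_approx T (Q + 1)) as [b [Hb Happ_b]];
    [exists L0; exact HT0 | intros t [? _]; lra |].
  assert (HQa : Q <= a).
  { apply Rnot_lt_le. intros Hlt. destruct (Happ_a (Q - a)) as [t [[? _] ?]]; lra. }
  assert (HbQ : b <= Q + 1).
  { apply Rnot_lt_le. intros Hlt. destruct (Happ_b (b - (Q + 1))) as [t [[? _] ?]]; lra. }
  assert (Aa : A (proj a)).
  { apply S1_closed_limit; [exact Hcl |]. intros rho Hrho.
    destruct (Happ_a rho Hrho) as [t [Ht Hlt]]. specialize (Ha t Ht).
    exists t. split; [apply Ht | apply Rabs_def1; lra]. }
  assert (Ab : A (proj b)).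
  { apply S1_closed_limit; [exact Hcl |]. intros rho Hrho.
    destruct (Happ_b rho Hrho) as [t [Ht Hlt]]. specialize (Hb t Ht).
    exists t. split; [apply Ht | apply Rabs_def1; lra]. }
  exists a, b. split; [specialize (Ha L0 HT0); specialize (Hb L0 HT0); lra |]. intros z. split.
  - intros Hz. destruct (Hlift z Hz) as [L [HL <-]].
    assert (HTL : T L) by (split; [exact HL | exact Hz]).
    exists L. split; [split; [apply Ha | apply Hb]; exact HTL | reflexivity].
  - intros [t [Ht <-]].
    destruct (Req_dec t a) as [-> | Hta]; [exact Aa |].
    destruct (Req_dec t b) as [-> | Htb]; [exact Ab |].
    apply NNPP. intros Hnt. apply (not_connected_of_gap A Q t); auto; [lra | |].
    + destruct (Happ_a (t - a)) as [s [[Hs As] Hlt]]; [lra |]. exists s. split; [lra | exact As].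
    + destruct (Happ_b (b - t)) as [s [[Hs As] Hlt]]; [lra |]. exists s. split; [lra | exact As].
Qed.

Lemma Arc_shift (a b : R) (k : Z) : Arc (a + IZR k) (b + IZR k) = Arc a b.
Proof.
  apply functional_extensionality. intros z. apply propositional_extensionality. split.
  - intros [s [Hs <-]]. exists (s - IZR k). split; [lra |].
    rewrite <- (proj_shift (s - IZR k) k). f_equal. ring.
  - intros [s [Hs <-]]. exists (s + IZR k). split; [lra | apply proj_shift].
Qed.

Lemma CS1_Arc_normal (A : S1 -> Prop) : in_CS1 A ->
  exists a b, 0 <= a < 1 /\ a <= b <= a + 1 /\ A = Arc a b.
Proof.
  intros HA. destruct (CS1_is_Arc A HA) as [a [b [Hab HAab]]].
  destruct (shift_exists a 0) as [k Hk].
  exists (a + IZR k), (b + IZR k). split; [lra | split; [lra |]].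
  rewrite Arc_shift. apply functional_extensionality. intros z.
  apply propositional_extensionality, HAab.
Qed.

(** * Polynomial upper bound *)

Lemma clamp_close (a b a' b' s de : R) : a' <= b' -> a <= s <= b ->
  Rabs (a - a') < de -> Rabs (b - b') < de -> Rabs (s - clamp a' b' s) < de.
Proof.
  intros Hab' Hs Ha Hb. apply Rabs_def2 in Ha, Hb. apply Rabs_def1;
    unfold clamp, Rmax, Rmin; repeat destruct Rle_dec; lra.
Qed.

Lemma Arc_subset_nbhd (a b a' b' de : R) : a' <= b' ->
  Rabs (a - a') < de -> Rabs (b - b') < de -> subset (Arc a b) (nbhd (Arc a' b') de).
Proof.
  intros Hab' Ha Hb x [s [Hs <-]]. exists (proj (clamp a' b' s)). split.
  - exists (clamp a' b' s). split; [apply clamp_in, Hab' | reflexivity].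
  - change (dR s (clamp a' b' s) < de).
    eapply Rle_lt_trans; [apply dR_le_Rabs | apply (clamp_close a b); assumption].
Qed.

Lemma dH_Arc_le (a b a' b' de : R) : a <= b -> a' <= b' -> 0 < de ->
  Rabs (a - a') < de -> Rabs (b - b') < de -> dH (Arc a b) (Arc a' b') <= de.
Proof.
  intros Hab Hab' Hde Ha Hb. apply dH_le; [exact Hde | |].
  - apply Arc_subset_nbhd; assumption.
  - apply Arc_subset_nbhd; rewrite 1?Rabs_minus_sym; assumption.
Qed.

Definition arc_endpoints (A : S1 -> Prop) : R * R :=
  epsilon (inhabits (0, 0))
    (fun ab => 0 <= fst ab < 1 /\ fst ab <= snd ab <= fst ab + 1 /\ A = Arc (fst ab) (snd ab)).

Lemma arc_endpoints_spec (A : S1 -> Prop) : in_CS1 A ->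
  0 <= fst (arc_endpoints A) < 1 /\
  fst (arc_endpoints A) <= snd (arc_endpoints A) <= fst (arc_endpoints A) + 1 /\
  A = Arc (fst (arc_endpoints A)) (snd (arc_endpoints A)).
Proof.
  intros HA. unfold arc_endpoints. apply epsilon_spec.
  destruct (CS1_Arc_normal A HA) as [a [b Hab]]. exists (a, b). exact Hab.
Qed.

Lemma Int_part_le (x y : R) : x <= y -> (Int_part x <= Int_part y)%Z.
Proof.
  intros H. destruct (base_Int_part x), (base_Int_part y).
  apply Z.lt_succ_r, lt_IZR. rewrite succ_IZR. lra.
Qed.

Lemma Int_part_add_IZR (x : R) (m : Z) : Int_part (x + IZR m) = (Int_part x + m)%Z.
Proof.
  destruct (base_Int_part x). symmetry. apply Int_part_spec. rewrite plus_IZR. lra.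
Qed.

Lemma Int_part_eq_close (x y : R) : Int_part x = Int_part y -> Rabs (x - y) < 1.
Proof.
  intros H. destruct (base_Int_part x), (base_Int_part y). rewrite H in *.
  apply Rabs_def1; lra.
Qed.

Section PolynomialBound.

Variables (f : S1 -> S1) (F : R -> R).
Hypothesis HF : is_increasing_lift f F.
Variable M : nat.
Hypothesis HM : (0 < M)%nat.

Definition cell_index (k : nat) (t : R) : Z := Int_part (INR M * Nat.iter k F t).

Fixpoint cell_sum (n : nat) (t : R) : Z :=
  match n with O => 0%Z | S n => (cell_sum n t + cell_index n t)%Z end.

Lemma cell_index_le (k : nat) (t t' : R) : t <= t' -> (cell_index k t <= cell_index k t')%Z.
Proof.
  intros H. apply Int_part_le, Rmult_le_compat_l; [apply pos_INR |].
  apply (iter_lift_le f F HF), H.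
Qed.

Lemma cell_index_range (k : nat) (t : R) : 0 <= t <= 2 ->
  (cell_index k 0 <= cell_index k t <= cell_index k 0 + Z.of_nat (2 * M))%Z.
Proof.
  intros H. split; [apply cell_index_le; lra |].
  replace (cell_index k 0 + Z.of_nat (2 * M))%Z with (cell_index k 2); [apply cell_index_le; lra |].
  unfold cell_index. replace 2 with (0 + 1 + 1) by ring.
  rewrite !(iter_lift_plus1 f F HF), <- Int_part_add_IZR, <- INR_IZR_INZ, mult_INR.
  f_equal. simpl. ring.
Qed.

Lemma cell_sum_le (n : nat) (t t' : R) : t <= t' -> (cell_sum n t <= cell_sum n t')%Z.
Proof.
  intros H. induction n as [| n IH]; simpl; [lia |].
  pose proof (cell_index_le n t t' H). lia.
Qed.

Lemma cell_sum_range (n : nat) (t : R) : 0 <= t <= 2 ->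
  (cell_sum n 0 <= cell_sum n t <= cell_sum n 0 + Z.of_nat (n * (2 * M)))%Z.
Proof.
  intros H. induction n as [| n IH]; simpl; [lia |].
  pose proof (cell_index_range n t H). lia.
Qed.

(* Each [cell_index k] is nondecreasing in [t], so equal sums force equal
   summands. *)
Lemma cell_sum_inj (n : nat) (t t' : R) : cell_sum n t = cell_sum n t' ->
  forall k, (k < n)%nat -> cell_index k t = cell_index k t'.
Proof.
  assert (Hle : forall u u', u <= u' -> cell_sum n u = cell_sum n u' ->
                  forall k, (k < n)%nat -> cell_index k u = cell_index k u').
  { intros u u' Huu'. induction n as [| n IH]; simpl; intros E k Hk; [lia |].
    pose proof (cell_sum_le n u u' Huu'). pose proof (cell_index_le n u u' Huu').
    destruct (Nat.eq_dec k n) as [-> | Hkn]; [lia |]. apply IH; lia. }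
  intros E k Hk. destruct (Rle_lt_dec t t').
  - apply (Hle t t'); assumption.
  - symmetry. apply (Hle t' t); [lra | symmetry; exact E | exact Hk].
Qed.

Lemma cell_index_close (k : nat) (t t' : R) : cell_index k t = cell_index k t' ->
  Rabs (Nat.iter k F t - Nat.iter k F t') < / INR M.
Proof.
  intros E. apply Int_part_eq_close in E.
  assert (HMpos : 0 < INR M) by (apply lt_0_INR, HM).
  rewrite <- Rmult_minus_distr_l, Rabs_mult, Rabs_pos_eq in E by lra.
  apply (Rmult_lt_reg_l (INR M)); [exact HMpos |]. rewrite Rinv_r; lra.
Qed.

Definition arc_code (n : nat) (A : S1 -> Prop) : nat * nat :=
  (Z.to_nat (cell_sum n (fst (arc_endpoints A)) - cell_sum n 0),
   Z.to_nat (cell_sum n (snd (arc_endpoints A)) - cell_sum n 0)).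

Lemma arc_code_range (n : nat) (A : S1 -> Prop) : in_CS1 A ->
  In (arc_code n A) (list_prod (seq 0 (2 * M * n + 1)) (seq 0 (2 * M * n + 1))).
Proof.
  intros HA. destruct (arc_endpoints_spec A HA) as [Ha [Hb _]].
  pose proof (cell_sum_range n (fst (arc_endpoints A)) ltac:(lra)).
  pose proof (cell_sum_range n (snd (arc_endpoints A)) ltac:(lra)).
  apply in_prod; apply in_seq; lia.
Qed.

Lemma arc_code_close (n : nat) (A A' : S1 -> Prop) : in_CS1 A -> in_CS1 A' ->
  arc_code n A = arc_code n A' ->
  forall k, (k < n)%nat -> dH (Nat.iter k (Cmap f) A) (Nat.iter k (Cmap f) A') <= / INR M.
Proof.
  intros HA HA' Hcode k Hk.
  destruct (arc_endpoints_spec A HA) as [Ha [Hb ->]].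
  destruct (arc_endpoints_spec A' HA') as [Ha' [Hb' ->]].
  unfold arc_code in Hcode. injection Hcode as Hcode1 Hcode2.
  pose proof (cell_sum_range n (fst (arc_endpoints A)) ltac:(lra)).
  pose proof (cell_sum_range n (fst (arc_endpoints A')) ltac:(lra)).
  pose proof (cell_sum_range n (snd (arc_endpoints A)) ltac:(lra)).
  pose proof (cell_sum_range n (snd (arc_endpoints A')) ltac:(lra)).
  rewrite !(iter_Cmap_Arc f F HF) by lra.
  apply dH_Arc_le; try (apply (iter_lift_le f F HF); lra);
    [apply Rinv_0_lt_compat, lt_0_INR, HM | |];
    apply cell_index_close, (cell_sum_inj n); [lia | exact Hk | lia | exact Hk].
Qed.

Lemma hyperspace_sep_bounded (n : nat) (eps : R) : / INR M < eps ->
  sep_bounded in_CS1 (Cmap f) dH n eps (INR ((2 * M * n + 1) * (2 * M * n + 1))).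
Proof.
  intros HMe E [HND [HK Hsep]]. apply le_INR.
  rewrite <- (length_map (arc_code n) E).
  rewrite <- (length_seq (2 * M * n + 1) 0) at 1 2. rewrite <- length_prod. apply NoDup_incl_length.
  - apply NoDup_map_NoDup_ForallPairs; [| exact HND].
    intros A A' HA HA' Hcode. apply NNPP. intros Hne.
    specialize (Hsep A A' HA HA' Hne).
    assert (dyn_dist (Cmap f) dH n A A' < eps); [| lra].
    apply dyn_dist_lt; [pose proof (Rinv_0_lt_compat _ (lt_0_INR _ HM)); lra |].
    intros k Hk. eapply Rle_lt_trans; [| exact HMe].
    apply (arc_code_close n); auto.
  - intros c Hc. apply in_map_iff in Hc as [A [<- HA]]. apply arc_code_range, HK, HA.
Qed.

End PolynomialBound.

Lemma hpol_eps_le_2 (f : S1 -> S1) (F : R -> R) (eps : R) :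
  is_increasing_lift f F -> 0 < eps -> Rbar_le (hpol_eps in_CS1 (Cmap f) dH eps) 2.
Proof.
  intros HF He. destruct (small_inverse eps He) as [M [HM HMe]].
  apply LimSup_seq_le. intros e Hep.
  destruct (ln_eventually_ge (2 * ln (3 * INR M)) e Hep) as [N [HN1 HN]].
  exists N. intros n Hn.
  pose proof (hyperspace_sep_bounded f F HF M HM n eps HMe) as HB.
  apply (log_ratio_le e _ M n); [exact Hep | lia | lia | apply HN, Hn | |].
  - apply (sep_ge1 _ _ _ n eps _ (Arc 0 0) (Arc_in_CS1 0 0 ltac:(lra)) HB).
  - apply (sep_le _ _ _ n eps _ HB).
Qed.

(** * Lower bound from a wandering point *)

(* The circle is connected, while the first coordinate splits the Cantor set
   into two relatively open pieces. *)
Lemma wandering_point_exists (f : S1 -> S1) :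
  homeomorphic_to_Cantor (NW f) -> exists p, wandering f p.
Proof.
  intros [h [_ [Hsurj [Hinj [_ Hinv]]]]]. apply NNPP. intros Hno.
  assert (Hall : forall x, NW f x) by (intros x Hw; apply Hno; exists x; exact Hw).
  assert (Hclopen : forall c : bool, S1_open (fun x => exists a, h a = x /\ a 0%nat = c)).
  { intros c x [a [<- Ha]]. destruct (Hinv a 1%nat) as [de [Hde Hagree]].
    exists de. split; [exact Hde |]. intros y Hy. destruct (Hsurj y (Hall y)) as [b <-].
    exists b. split; [reflexivity |]. rewrite <- (Hagree b Hy 0%nat ltac:(lia)). exact Ha. }
  apply (Arc_connected 0 1 ltac:(lra)).
  exists (fun x => exists a, h a = x /\ a 0%nat = true),
         (fun x => exists a, h a = x /\ a 0%nat = false).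
  split; [apply Hclopen | split; [apply Hclopen | split; [| split; [| split]]]].
  - intros x _. destruct (Hsurj x (Hall x)) as [a <-].
    destruct (a 0%nat) eqn:E; [left | right]; exists a; auto.
  - exists (h (fun _ => true)). split; [apply Arc_0_1_full | exists (fun _ => true); auto].
  - exists (h (fun _ => false)). split; [apply Arc_0_1_full | exists (fun _ => false); auto].
  - intros x _ [a [<- Ha]] [b [Hb Hb0]]. apply Hinj in Hb. subst. congruence.
Qed.

Lemma wandering_ball (f : S1 -> S1) (p : S1) : wandering f p ->
  exists r, 0 < r /\
    forall n y, (1 <= n)%nat -> dS p y < r -> ~ dS p (Nat.iter n f y) < r.
Proof.
  intros [U [[r [Hr Hball]] Hw]]. exists r. split; [exact Hr |].
  intros n y Hn Hy Hny. apply (Hw n Hn y (Hball y Hy) (Hball _ Hny)).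
Qed.

Definition lift_above (a : R) (z : S1) : R :=
  if Rlt_dec a (proj1_sig z) then proj1_sig z else proj1_sig z + 1.

Lemma lift_above_spec (a : R) (z : S1) : 0 <= a < 1 -> proj1_sig z <> a ->
  a < lift_above a z < a + 1 /\ proj (lift_above a z) = z.
Proof.
  intros Ha Hz. destruct z as [z Hz01]; simpl in *. unfold lift_above; simpl.
  destruct Rlt_dec.
  - split; [lra | apply (proj_val (exist _ z Hz01))].
  - split; [lra |]. rewrite (proj_shift z 1). apply (proj_val (exist _ z Hz01)).
Qed.

Section WanderingPoint.

Variables (f g : S1 -> S1) (F : R -> R).
Hypothesis Hfg : forall y, f (g y) = y.
Hypothesis HF : is_increasing_lift f F.
Variables (p : S1) (r : R).
Hypothesis Hr : 0 < r.
Hypothesis Hwand : forall n y, (1 <= n)%nat -> dS p y < r -> ~ dS p (Nat.iter n f y) < r.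

Let back (j : nat) : S1 := Nat.iter j g p.

Lemma iter_f_iter_g (i : nat) (y : S1) : Nat.iter i f (Nat.iter i g y) = y.
Proof.
  revert y; induction i as [| i IH]; intros y; [reflexivity |].
  change (Nat.iter (S i) f (g (Nat.iter i g y)) = y). rewrite Nat.iter_succ_r, Hfg. apply IH.
Qed.

Lemma iter_back_le (i j : nat) : (i <= j)%nat -> Nat.iter i f (back j) = back (j - i).
Proof.
  intros H. unfold back. destruct (Nat.le_exists_sub i j H) as [m [-> _]].
  replace (m + i - i)%nat with m by lia.
  rewrite Nat.add_comm, Nat.iter_add. apply iter_f_iter_g.
Qed.

Lemma iter_back_ge (i j : nat) : (j <= i)%nat -> Nat.iter i f (back j) = Nat.iter (i - j) f p.
Proof.
  intros H. unfold back. destruct (Nat.le_exists_sub j i H) as [m [-> _]].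
  replace (m + j - j)%nat with m by lia.
  rewrite Nat.iter_add, iter_f_iter_g. reflexivity.
Qed.

Lemma back_far (k j : nat) : k <> j -> r <= dS p (Nat.iter k f (back j)).
Proof.
  intros Hkj. apply Rnot_lt_le. destruct (Nat.le_gt_cases k j) as [H | H].
  - rewrite iter_back_le by exact H. intros Hnear.
    apply (Hwand (j - k) (back (j - k)) ltac:(lia) Hnear).
    unfold back. rewrite iter_f_iter_g, dS_refl. exact Hr.
  - rewrite iter_back_ge by lia. apply Hwand; [lia | rewrite dS_refl; exact Hr].
Qed.

Let start (i : nat) : R := proj1_sig (back i).
Let stop (i j : nat) : R := lift_above (start i) (back j).

Lemma start_spec (i : nat) : 0 <= start i < 1 /\ proj (start i) = back i.
Proof. unfold start. split; [destruct (back i) as [v Hv]; exact Hv | apply proj_val]. Qed.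

Lemma stop_spec (i j : nat) : i <> j ->
  start i < stop i j < start i + 1 /\ proj (stop i j) = back j.
Proof.
  intros Hij. apply lift_above_spec; [apply start_spec |]. intros E.
  pose proof (back_far i j Hij) as Hfar. rewrite (S1_eq (back j) (back i) E) in Hfar.
  unfold back in Hfar. rewrite iter_f_iter_g, dS_refl in Hfar. lra.
Qed.

Let arc (i j : nat) : S1 -> Prop := Arc (start i) (stop i j).

Lemma arc_in_CS1 (i j : nat) : i <> j -> in_CS1 (arc i j).
Proof. intros Hij. apply Arc_in_CS1. pose proof (stop_spec i j Hij). lra. Qed.

Lemma iter_arc (k i j : nat) : i <> j ->
  Nat.iter k (Cmap f) (arc i j) = Arc (Nat.iter k F (start i)) (Nat.iter k F (stop i j)).
Proof. intros Hij. apply (iter_Cmap_Arc f F HF). pose proof (stop_spec i j Hij). lra. Qed.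

Lemma iter_arc_endpoints (k i j : nat) : i <> j ->
  Nat.iter k F (start i) <= Nat.iter k F (stop i j) < Nat.iter k F (start i) + 1.
Proof.
  intros Hij. destruct (proj1 (stop_spec i j Hij)) as [Hlo Hhi]. split.
  - apply (iter_lift_le f F HF). lra.
  - rewrite <- (iter_lift_plus1 f F HF). apply (iter_lift_lt f F HF). lra.
Qed.

Lemma iter_lift_return (k : nat) (u : R) : proj u = back k -> proj (Nat.iter k F u) = p.
Proof. intros Hu. rewrite (proj_iter_lift f F HF), Hu. apply iter_f_iter_g. Qed.

Lemma iter_lift_far (k j : nat) (u v : R) : k <> j -> proj u = back j -> proj v = p ->
  r <= dR (Nat.iter k F u) v.
Proof.
  intros Hkj Hu Hv. unfold dR. rewrite (proj_iter_lift f F HF), Hu, Hv, dS_sym.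
  apply back_far, Hkj.
Qed.

(* Two distinct arcs of the family are far apart at the time when one of
   their endpoints sits at [p] while all other endpoints are [r]-far from it. *)
Lemma arc_pair_far (i j i' j' : nat) : i <> j -> i' <> j' -> j' <> i -> (i, j) <> (i', j') ->
  exists k, (k = i \/ k = j) /\
    r / 2 <= dH (Nat.iter k (Cmap f) (arc i j)) (Nat.iter k (Cmap f) (arc i' j')).
Proof.
  intros Hij Hij' Hj'i Hne.
  pose proof (iter_arc_endpoints) as Hend.
  destruct (Nat.eq_dec i i') as [<- | Hii'].
  - assert (Hjj' : j <> j') by (intros <-; apply Hne; reflexivity).
    assert (Hp : proj (Nat.iter j F (stop i j)) = p)
      by (apply iter_lift_return, stop_spec, Hij).
    exists j. split; [right; reflexivity |].
    rewrite !iter_arc by assumption. apply arcs_apart_dH; [apply Hend, Hij | apply Hend, Hij' |].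
    apply arcs_apart_far_from_end; [exact Hr | apply Hend, Hij | apply Hend, Hij' | | |].
    + apply (iter_lift_far j i); [auto | apply start_spec | exact Hp].
    + apply (iter_lift_far j i); [auto | apply start_spec | exact Hp].
    + apply (iter_lift_far j j'); [exact Hjj' | apply stop_spec, Hij' | exact Hp].
  - assert (Hp : proj (Nat.iter i F (start i)) = p) by (apply iter_lift_return, start_spec).
    exists i. split; [left; reflexivity |].
    rewrite !iter_arc by assumption. apply arcs_apart_dH; [apply Hend, Hij | apply Hend, Hij' |].
    apply arcs_apart_far_from_start; [exact Hr | apply Hend, Hij | apply Hend, Hij' | | |].
    + apply (iter_lift_far i j); [exact Hij | apply stop_spec, Hij | exact Hp].
    + apply (iter_lift_far i i'); [exact Hii' | apply start_spec | exact Hp].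
    + apply (iter_lift_far i j'); [auto | apply stop_spec, Hij' | exact Hp].
Qed.

Let family (N : nat) : list (S1 -> Prop) :=
  map (fun ij => arc (fst ij) (snd ij)) (list_prod (seq 0 N) (seq N N)).

Lemma family_separated (N : nat) (eps : R) : 0 < eps <= r / 2 ->
  separated in_CS1 (Cmap f) dH (2 * N) eps (family N).
Proof.
  intros He.
  assert (Hidx : forall i j, In (i, j) (list_prod (seq 0 N) (seq N N)) ->
                   (i < N)%nat /\ (N <= j < 2 * N)%nat).
  { intros i j Hin. apply in_prod_iff in Hin as [Hi Hj]. apply in_seq in Hi, Hj. lia. }
  assert (Hfar : forall ij ij', In ij (list_prod (seq 0 N) (seq N N)) ->
            In ij' (list_prod (seq 0 N) (seq N N)) -> ij <> ij' ->
            r / 2 <= dyn_dist (Cmap f) dH (2 * N)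
                       (arc (fst ij) (snd ij)) (arc (fst ij') (snd ij'))).
  { intros [i j] [i' j'] Hin Hin' Hne. apply Hidx in Hin, Hin'. simpl.
    destruct (arc_pair_far i j i' j') as [k [Hk Hdist]]; [lia | lia | lia | exact Hne |].
    eapply Rle_trans; [exact Hdist | apply dyn_dist_ge; lia]. }
  split; [| split].
  - apply NoDup_map_NoDup_ForallPairs; [| apply NoDup_list_prod; apply seq_NoDup].
    intros ij ij' Hin Hin' E. apply NNPP. intros Hne.
    pose proof (Hfar ij ij' Hin Hin' Hne) as Hd. rewrite E in Hd.
    assert (Hself : forall A, dyn_dist (Cmap f) dH (2 * N) A A < r / 2).
    { intros A. apply dyn_dist_lt; [lra |]. intros k _.
      apply Rle_lt_trans with (r / 4); [apply dH_self_le |]; lra. }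
    specialize (Hself (arc (fst ij') (snd ij'))). lra.
  - intros A HA. apply in_map_iff in HA as [[i j] [<- Hin]]. apply Hidx in Hin.
    apply arc_in_CS1. simpl. lia.
  - intros A A' HA HA' Hne.
    apply in_map_iff in HA as [ij [<- Hin]], HA' as [ij' [<- Hin']].
    assert (Hij : ij <> ij') by (intros <-; apply Hne; reflexivity).
    pose proof (Hfar ij ij' Hin Hin' Hij). lra.
Qed.

Lemma family_length (N : nat) : length (family N) = (N * N)%nat.
Proof. unfold family. rewrite length_map, length_prod, !length_seq. reflexivity. Qed.

Lemma hpol_eps_ge_2 (eps : R) : 0 < eps <= r / 2 ->
  Rbar_le 2 (hpol_eps in_CS1 (Cmap f) dH eps).
Proof.
  intros He. destruct (small_inverse eps ltac:(lra)) as [M [HM HMe]].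
  apply LimSup_seq_ge. intros e Hep N0.
  destruct (ln_eventually_ge (2 * ln 2) e Hep) as [N1 [HN1 Hln]].
  set (N := Nat.max N0 N1).
  exists (2 * N)%nat. split; [lia |].
  apply log_ratio_ge; [lia | apply Hln; lia |].
  rewrite <- family_length.
  apply (length_le_sep _ _ _ _ _ _ _ (hyperspace_sep_bounded f F HF M HM (2 * N) eps HMe)).
  apply family_separated, He.
Qed.

End WanderingPoint.

Theorem corollary1 (f : S1 -> S1) :
  orientation_preserving_homeo f ->
  irrational_rotation_number f ->
  homeomorphic_to_Cantor (NW f) ->
  exists h : Rbar, is_hpol in_CS1 (Cmap f) dH h /\ Rbar_le 2 h.
Proof.
  intros [[_ [g [_ [_ Hfg]]]] [F HF]] _ HNW.
  destruct (wandering_point_exists f HNW) as [p Hp].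
  destruct (wandering_ball f p Hp) as [r [Hr Hwand]].
  exists (Finite 2). split; [| simpl; lra].
  intros e He. exists (r / 2). split; [lra |]. intros eps Heps.
  replace (hpol_eps in_CS1 (Cmap f) dH eps) with (Finite 2); [simpl; lra |].
  apply Rbar_le_antisym.
  - apply (hpol_eps_ge_2 f g F Hfg HF p r Hr Hwand). lra.
  - apply (hpol_eps_le_2 f F); [exact HF | lra].
Qed.
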